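(* Let $W$ be a stopping time in $\mathcal{T}$ and let $0<\rho<1$. Then $W_{\mathcal{T}}^{\rho}\subset\widehat{W_{\mathcal{T}}^{\rho}}$ as open subsets of the circle, that is, $S_{\mathcal{T}}(W_{\mathcal{T}}^{\rho})\subset S_{\mathcal{T}}(\widehat{W_{\mathcal{T}}^{\rho}})$. Consequently $Cap_{\mathcal{T}}W_{\mathcal{T}}^{\rho}\le\rho^{-2}Cap_{\mathcal{T}}W$.
   Context: Tree. $\mathcal{T}$ is the rooted dyadic tree whose vertices are the dyadic arcs of the unit circle. The root $o$ is the whole circle. The vertices at level $n\ge0$ are the arcs $\{e^{it}:2\pi j2^{-n}\le t<2\pi(j+1)2^{-n}\}$ for $0\le j<2^n$. Each vertex has two children, which are the two arcs at the next level contained in it. $I(x)$ denotes the arc of the vertex $x$. Write $y\le x$ if $x$ lies in the subtree rooted at $y$ (equivalently $I(x)\subset I(y)$), and $y<x$ if moreover $y\ne x$. $[o,x]=\{y:y\le x\}$. $d(x)$ is the number of vertices in $[o,x]$, so $d(o)=1$. A stopping time is a set of pairwise incomparable vertices. $\mathcal{G}(\{o\},W)$ is the union of $[o,w]$, $w\in W$. The shadow of a stopping time $W$ is $S_{\mathcal{T}}(W)=\bigcup_{x\in W}I(x)$. Capacity. For $f:\mathcal{T}\to\mathbb{R}$ put $If(x)=\sum_{y\in[o,x]}f(y)$, and define $Cap_{\mathcal{T}}(W)=\inf\{\|f\|^2_{\ell^2}:If\ge1\text{ on }W\}$. Stopping time blowup. For $0\le\rho\le1$ and $\kappa\in\mathcal{T}$,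 $R^\rho\kappa$ is the unique vertex with $o\le R^\rho\kappa\le\kappa$ and $\rho d(\kappa)\le d(R^\rho\kappa)<\rho d(\kappa)+1$. $W^\rho_{\mathcal{T}}$ is the set of minimal elements of $\{R^\rho\kappa:\kappa\in W\}$. Capacitary blowup. Let $h$ be the unique minimizer of $Cap_{\mathcal{T}}(W)$ and $H=Ih$, so $H=1$ on $W$ and $\|h\|^2=Cap_{\mathcal{T}}W$. Then $\widehat{W^\rho_{\mathcal{T}}}=\{t\in\mathcal{G}(\{o\},W):H(t)\ge\rho\text{ and }H(x)\le\rho\text{ for all }x<t\}$. *)

From HB Require Import structures.
From mathcomp Require Import all_boot all_order all_algebra.
From mathcomp Require Import all_classical all_reals all_analysis.
Import Order.TTheory GRing.Theory Num.Theory.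
Local Open Scope classical_set_scope.
Local Open Scope ring_scope.

(* Vertices of the dyadic tree: finite bit strings.  The vertex s of length
   n = size s is the arc with index j = dyidx s (first bit most significant),
   i.e. {e^{it} : 2 pi j 2^-n <= t < 2 pi (j+1) 2^-n}. *)
Definition vtx := seq bool.
Definition root : vtx := [::].

Definition dyidx (s : vtx) : nat := foldl (fun acc (b : bool) => acc.*2 + b) 0%N s.

(* y <= x in the tree order : x lies in the subtree rooted at y. *)
Definition tle (y x : vtx) : bool := prefix y x.
Definition tlt (y x : vtx) : bool := prefix y x && (y != x).

(* d(x) = number of vertices in [o,x] *)
Definition depth (x : vtx) : nat := (size x).+1.

(* Arc I(x), parametrised by t/(2 pi) in [0,1). *)
Definition arc (R : realType) (x : vtx) : set R :=
  [set t | (dyidx x)%:R / 2 ^+ size x <= t /\ t < (dyidx x).+1%:R / 2 ^+ size x].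

Definition stopping_time (W : set vtx) : Prop :=
  forall x y, W x -> W y -> tle x y -> x = y.

Definition shadow (R : realType) (W : set vtx) : set R :=
  \bigcup_(x in W) arc R x.

Definition Iop {R : realType} (f : vtx -> R) (x : vtx) : R :=
  \sum_(k < (size x).+1) f (take k x).

Definition admissible {R : realType} (W : set vtx) (f : vtx -> R) : Prop :=
  forall w, W w -> 1 <= Iop f w.

Definition l2sq {R : realType} (f : vtx -> R) : \bar R :=
  \esum_(x in [set: vtx]) ((f x) ^+ 2)%:E.

Definition Cap (R : realType) (W : set vtx) : \bar R :=
  ereal_inf [set l2sq f | f in [set f : vtx -> R | admissible W f]].

Definition cap_minimizer {R : realType} (W : set vtx) (h : vtx -> R) : Prop :=
  admissible W h /\ l2sq h = Cap R W.

Definition Rrho_set {R : realType} (rho : R) (W : set vtx) : set vtx :=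
  [set y | exists2 k, W k & tle y k /\
     rho * (depth k)%:R <= (depth y)%:R /\ (depth y)%:R < rho * (depth k)%:R + 1].

Definition minimal_elts (A : set vtx) : set vtx :=
  [set y | A y /\ forall z, A z -> ~~ tlt z y].

Definition blowup {R : realType} (rho : R) (W : set vtx) : set vtx :=
  minimal_elts (Rrho_set rho W).

Definition cap_blowup {R : realType} (rho : R) (W : set vtx) (h : vtx -> R) : set vtx :=
  [set t | (exists2 w, W w & tle t w) /\ rho <= Iop h t /\
           forall x, tlt x t -> Iop h x <= rho].

From Pilot Require Import Defs.
From HB Require Import structures.
From mathcomp Require Import all_boot all_order all_algebra.
From mathcomp Require Import all_classical all_reals all_analysis.
From mathcomp Require Import ring lra zify.
Import Order.TTheory GRing.Theory Num.Theory Order.NatMonotonyTheory.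
Import numFieldNormedType.Exports.
Local Open Scope classical_set_scope.
Local Open Scope ring_scope.

(* By the parallelogram law, near-minimizing admissible functions are
   pointwise close, so the capacity has a unique minimizer h (a pointwise limit
   of a minimizing sequence).  Swapping the values of h at a vertex and at a
   child carrying a larger value keeps h admissible and preserves its energy,
   so by uniqueness h decreases along every branch.  Hence H = I h is concave
   along each path [o, k]; as H k >= 1 for k in W, the vertex R^rho k, of depth
   at least rho d(k), has H >= rho.  This puts an ancestor of each vertex of
   the stopping time blowup into the capacitary blowup, and makes rho^-1 h,
   of energy rho^-2 Cap W, admissible for the blowup. *)

Lemma dyidx_rcons q (b : bool) : dyidx (rcons q b) = ((dyidx q).*2 + b)%N.
Proof. by rewrite /dyidx -cats1 foldl_cat. Qed.

Lemma dyidx_cat p q : dyidx (p ++ q) = (dyidx p * 2 ^ size q + dyidx q)%N.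
Proof.
elim/last_ind: q => [|q b IH]; first by rewrite cats0 muln1 addn0.
rewrite -rcons_cat !dyidx_rcons IH size_rcons expnS; lia.
Qed.

Lemma dyidx_ltn q : (dyidx q < 2 ^ size q)%N.
Proof.
elim/last_ind: q => [|q b IH] //.
rewrite dyidx_rcons size_rcons expnS; case: b; lia.
Qed.

Lemma arc_prefix_sub (R : realType) p s : prefix p s -> Defs.arc R s `<=` Defs.arc R p.
Proof.
move=> /prefixP [q ->] t []; rewrite dyidx_cat size_cat exprD.
have qlt := dyidx_ltn q.
have scale k : (k%:R / 2 ^+ size p : R) = (k * 2 ^ size q)%:R / (2 ^+ size p * 2 ^+ size q).
  by rewrite natrM natrX; field; rewrite !expf_neq0.
have den0 : (0 : R) <= (2 ^+ size p * 2 ^+ size q)^-1 by rewrite invr_ge0 mulr_ge0.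
rewrite /Defs.arc /= !scale => h1 h2; split.
  by apply: le_trans h1; rewrite ler_wpM2r // ler_nat leq_addr.
apply: lt_le_trans h2 _; rewrite ler_wpM2r // ler_nat mulSn.
by rewrite addnC ltn_add2r.
Qed.

Section potential.
Context {R : realType}.
Implicit Types f g : vtx -> R.

Lemma IopD f g w : Iop (f \+ g) w = Iop f w + Iop g w.
Proof. exact: big_split. Qed.

Lemma IopZ (c : R) f w : Iop (fun y => c * f y) w = c * Iop f w.
Proof. by rewrite /Iop mulr_sumr. Qed.

Lemma Iop_indicator z w : Iop (fun y => ((y == z)%:R : R)) w = (prefix z w)%:R.
Proof.
rewrite /Iop; case: (boolP (prefix z w)) => pz; last first.
  by rewrite big1 // => k _; case: eqP => // e; move: pz; rewrite -e prefix_take.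
have zlt : (size z < (size w).+1)%N by rewrite ltnS size_prefix.
rewrite (bigD1 (Ordinal zlt)) //= big1 ?addr0.
  by move: pz; rewrite prefixE => /eqP ->; rewrite eqxx.
move=> [k klt] /= /eqP nek; case: eqP => // e; case: nek; apply: val_inj => /=.
by rewrite -e size_takel // -ltnS.
Qed.

Lemma Iop_prefix f t k : prefix t k ->
  Iop f t = \sum_(j < (size t).+1) f (take j k).
Proof.
rewrite prefixE => /eqP tk; apply: eq_bigr => -[j jlt] _ /=.
by rewrite -{1}tk take_takel // -ltnS.
Qed.

End potential.

Lemma nonincreasing_sum_avg {R : realDomainType} (a : nat -> R) (M N : nat) :
  (forall k, a k.+1 <= a k) -> (0 < M <= N)%N ->
  M%:R * \sum_(k < N) a k <= N%:R * \sum_(k < M) a k.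
Proof.
move=> /nonincnP a_dec /andP[M0]; elim: N => [|N IH]; first by rewrite leqn0 => /eqP ->.
rewrite leq_eqVlt => /orP [/eqP <- //| ]; rewrite ltnS => MN.
rewrite big_ord_recr /= mulrDr -natr1 mulrDl mul1r.
have tail : M%:R * a N <= \sum_(k < M) a k.
  rewrite mulr_natl -[in X in X <= _](card_ord M) -sumr_const.
  by apply: ler_sum => k _; apply: a_dec; exact: ltnW (leq_trans (ltn_ord k) MN).
have := IH MN; lra.
Qed.

Section esum_facts.
Context {R : realType} {T : choiceType}.
Implicit Types (S : set T) (a : T -> \bar R).
Local Open Scope ereal_scope.

Lemma esumD1 S a t : (forall x, S x -> 0 <= a x) -> S t ->
  \esum_(x in S) a x = a t + \esum_(x in S `\ t) a x.
Proof.
move=> a0 St; rewrite (esumID [set t]) // setDE.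
have -> : S `&` [set t] = [set t] by apply/seteqP; split => [y [] //|y /= ->].
by rewrite esum_set1 //; apply: a0.
Qed.

Lemma esum_ge_term S a t : (forall x, S x -> 0 <= a x) -> S t ->
  a t <= \esum_(x in S) a x.
Proof.
move=> a0 St; apply: esum_ge; exists [set t]; last by rewrite fsbig_set1.
by split; [exact: finite_set1 | move=> y ->].
Qed.

Lemma esumZl S a (c : R) : (0 <= c)%R -> (forall x, 0 <= a x) ->
  \esum_(x in S) (c%:E * a x) = c%:E * \esum_(x in S) a x.
Proof.
move=> c0 a0; rewrite /esum -ereal_supZl //; last first.
  by apply/set0P; exists 0; exists set0; [exact: fsets_set0|rewrite fsbig_set0].
congr ereal_sup; apply/seteqP; split => y /=.
  move=> [X XS <-]; exists (\sum_(x \in X) a x); first by exists X.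
  by case: XS => finX _; rewrite !fsbig_finite // ge0_sume_distrr.
move=> [z [X XS <-] <-]; exists X => //.
by case: XS => finX _; rewrite !fsbig_finite // ge0_sume_distrr.
Qed.

End esum_facts.

Lemma ge0_bounded_EFin {R : realType} {x : \bar R} {r : R} :
  (0 <= x)%E -> (x <= r%:E)%E -> exists s, x = s%:E.
Proof. by case: x => [s| |] //; exists s. Qed.

Definition swap_val {T : eqType} {V : Type} (f : T -> V) (x c : T) : T -> V :=
  fun y => if y == x then f c else if y == c then f x else f y.

Section energy.
Context {R : realType}.
Implicit Types f g : vtx -> R.

Lemma l2sq_ge0 f : (0 <= l2sq f)%E.
Proof. by apply: esum_ge0 => x _; rewrite lee_fin sqr_ge0. Qed.

Lemma l2sq_scale (c : R) f : l2sq (fun x => c * f x) = ((c ^+ 2)%:E * l2sq f)%E.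
Proof.
rewrite /l2sq -esumZl ?sqr_ge0 // => [|x]; last by rewrite lee_fin sqr_ge0.
by apply: eq_esum => x _; rewrite -EFinM exprMn.
Qed.

Lemma l2sq_parallelogram f g :
  (l2sq (fun x => (f x - g x) / 2)%R + l2sq (fun x => (f x + g x) / 2)%R =
   (2^-1)%:E * l2sq f + (2^-1)%:E * l2sq g)%E.
Proof.
have sq0 (r : R) : (0 <= (r ^+ 2)%:E)%E by rewrite lee_fin sqr_ge0.
have half0 (r : R) : (0 <= (2^-1)%:E * (r ^+ 2)%:E)%E.
  by rewrite mule_ge0 // lee_fin invr_ge0.
rewrite /l2sq -esumD // -!esumZl ?invr_ge0 // -esumD //.
by apply: eq_esum => y _; rewrite -!EFinM -!EFinD; congr EFin; field.
Qed.

Lemma l2sq_swap f x c : x != c -> l2sq (swap_val f x c) = l2sq f.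
Proof.
move=> xc; have sq0 (h : vtx -> R) y : (0 <= (h y ^+ 2)%:E)%E by rewrite lee_fin sqr_ge0.
have Sx : [set: vtx] x by [].
have Sc : ([set: vtx] `\ x) c by split => //= cx; move: xc; rewrite cx eqxx.
rewrite /l2sq.
rewrite (esumD1 _ _ _ (fun y _ => sq0 (swap_val f x c) y) Sx).
rewrite (esumD1 _ _ _ (fun y _ => sq0 (swap_val f x c) y) Sc).
rewrite (esumD1 _ _ _ (fun y _ => sq0 f y) Sx) (esumD1 _ _ _ (fun y _ => sq0 f y) Sc).
rewrite /swap_val eqxx eq_sym (negbTE xc) eqxx addeCA.
congr (_ + (_ + _))%E; apply: eq_esum => y [[_ /= yx] /= yc].
by move/eqP/negbTE: yx => ->; move/eqP/negbTE: yc => ->.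
Qed.

End energy.

Section capacity.
Variables (R : realType) (W : set vtx).
Implicit Types f g h : vtx -> R.

Lemma Cap_le_l2sq f : admissible W f -> (Cap R W <= l2sq f)%E.
Proof. by move=> af; apply: ereal_inf_lbound; exists f. Qed.

Lemma Cap_fin_num : Cap R W \is a fin_num.
Proof.
pose e0 (y : vtx) : R := (y == Defs.root)%:R.
have ae0 : admissible W e0 by move=> w _; rewrite /e0 Iop_indicator prefix0s.
have l2e0 : l2sq e0 = 1%:E.
  have sq0 y : [set: vtx] y -> (0 <= (e0 y ^+ 2)%:E)%E by rewrite lee_fin sqr_ge0.
  rewrite /l2sq (esumD1 _ _ Defs.root sq0) // esum1 ?adde0 /e0 ?eqxx ?expr1n //.
  by move=> y [_ /= /eqP]; case: eqP => // _ _; rewrite expr0n.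
have le1 : (Cap R W <= 1%:E)%E by rewrite -l2e0; exact: Cap_le_l2sq.
have ge0 : (0 <= Cap R W)%E.
  by apply: le_ereal_inf_tmp => _ [f _ <-]; exact: l2sq_ge0.
by rewrite ge0_fin_numE // (le_lt_trans le1) ?ltry.
Qed.

Lemma admissible_midpoint f g : admissible W f -> admissible W g ->
  admissible W (fun x => (f x + g x) / 2).
Proof.
move=> af ag w Ww; have := af w Ww; have := ag w Ww.
rewrite /Iop -mulr_suml big_split /=; lra.
Qed.

Lemma admissible_swap f x c : prefix x c -> f x <= f c ->
  admissible W f -> admissible W (swap_val f x c).
Proof.
move=> xc fxc af w Ww; set d := f c - f x.
have -> : swap_val f x c =
    f \+ ((fun y => d * (y == x)%:R) \+ (fun y => - d * (y == c)%:R)).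
  apply/funext => y /=; rewrite /swap_val /d.
  have [->|_] := eqVneq y x; first by case: eqP => [->|_] /=; ring.
  by have [->|_] := eqVneq y c => /=; ring.
rewrite !IopD !IopZ !Iop_indicator.
have := af w Ww; have d0 : 0 <= d by rewrite subr_ge0.
case: (boolP (prefix c w)) => cw.
  by rewrite (prefix_trans xc cw) /=; lra.
by case: (prefix x w) => /=; lra.
Qed.

Lemma near_minimizers_close f g (e1 e2 : R) :
  admissible W f -> admissible W g ->
  (l2sq f <= Cap R W + e1%:E)%E -> (l2sq g <= Cap R W + e2%:E)%E ->
  forall x, (f x - g x) ^+ 2 <= 2 * (e1 + e2).
Proof.
move=> af ag lf lg x; rewrite -(fineK Cap_fin_num) in lf lg.
set C := fine (Cap R W) in lf lg.
pose d y := (f y - g y) / 2; pose m y := (f y + g y) / 2.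
have Cm : (C%:E <= l2sq m)%E.
  by rewrite /C fineK ?Cap_fin_num //; apply/Cap_le_l2sq/admissible_midpoint.
have dx : (((d x) ^+ 2)%:E <= l2sq d)%E.
  by apply: esum_ge_term => // y _; rewrite lee_fin sqr_ge0.
have [rf rfE] := ge0_bounded_EFin (l2sq_ge0 f) lf.
have [rg rgE] := ge0_bounded_EFin (l2sq_ge0 g) lg.
have := l2sq_parallelogram f g; rewrite -/d -/m rfE rgE -!EFinM -EFinD => par.
move: lf lg; rewrite rfE rgE -!EFinD !lee_fin => lf lg.
have dle : (l2sq d <= (2^-1 * rf + 2^-1 * rg)%:E)%E by rewrite -par leeDl ?l2sq_ge0.
have mle : (l2sq m <= (2^-1 * rf + 2^-1 * rg)%:E)%E by rewrite -par leeDr ?l2sq_ge0.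
have [rd rdE] := ge0_bounded_EFin (l2sq_ge0 _) dle.
have [rm rmE] := ge0_bounded_EFin (l2sq_ge0 _) mle.
move: par Cm dx; rewrite rdE rmE -EFinD !lee_fin /d => -[par] Cm dx; lra.
Qed.

Lemma minimizer_unique h h' : cap_minimizer W h -> cap_minimizer W h' -> h = h'.
Proof.
move=> [ah lh] [ah' lh']; apply/funext => x.
have := near_minimizers_close h h' 0 0 ah ah'.
rewrite !adde0 lh lh' => /(_ (lexx _) (lexx _) x); rewrite addr0 mulr0 => sq_le0.
by apply/eqP; rewrite -subr_eq0 -sqrf_eq0 eq_le sq_le0 sqr_ge0.
Qed.

Lemma minimizer_nonincreasing h x b : cap_minimizer W h -> h (rcons x b) <= h x.
Proof.
move=> [ah lh]; set c := rcons x b; rewrite leNgt; apply/negP => lt_xc.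
have xc : x != c by apply/eqP => /(congr1 size); rewrite /c size_rcons; lia.
have mswap : cap_minimizer W (swap_val h x c).
  split; last by rewrite l2sq_swap.
  by apply: admissible_swap => //; [exact: prefix_rcons | exact: ltW].
have := congr1 (fun f => f x) (minimizer_unique _ _ mswap (conj ah lh)).
by rewrite /= /swap_val eqxx => hcx; move: lt_xc; rewrite hcx ltxx.
Qed.

End capacity.

Section existence.
Context {R : realType}.

Lemma cvg_harmonic_cauchy (u : nat -> R) :
  (forall n m, (u n - u m) ^+ 2 <= 2 * (n.+1%:R^-1 + m.+1%:R^-1)) -> cvg (u @ \oo).
Proof.
move=> uC; apply: cauchy_cvg; apply: cauchy_exP => e e0.
have [N NE] : exists N : nat, 4 / e ^+ 2 < N%:R.
  by exists (Num.bound (4 / e ^+ 2)); apply: archi_boundP; rewrite divr_ge0 ?sqr_ge0.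
exists (u N), N => // n /= Nn; rewrite /ball /=.
have nN : n.+1%:R^-1 <= N.+1%:R^-1 :> R by rewrite lef_pV2 ?posrE ?ltr0n // ler_nat.
have Ne : 4 * N.+1%:R^-1 < e ^+ 2.
  have e2 : 0 < e ^+ 2 by rewrite exprn_gt0.
  have : 4 < N%:R * e ^+ 2 by rewrite -ltr_pdivrMr.
  have : N%:R <= N.+1%:R :> R by rewrite ler_nat.
  rewrite ltr_pdivrMr ?ltr0n //; nra.
have uNn : (u N - u n) ^+ 2 < e ^+ 2.
  rewrite -sqrrN opprB; apply: le_lt_trans (uC n N) (le_lt_trans _ Ne).
  by move: nN; move: (n.+1%:R^-1 : R) (N.+1%:R^-1 : R) => p q; lra.
by rewrite -(ltr_pXn2r (n := 2)) ?nnegrE ?normr_ge0 ?(ltW e0) //= real_normK ?num_real.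
Qed.

Variable W : set vtx.

Lemma near_minimizing_seq : exists F : nat -> vtx -> R, forall n,
  admissible W (F n) /\ (l2sq (F n) <= Cap R W + (n.+1%:R^-1)%:E)%E.
Proof.
suff near_min n : exists f : vtx -> R,
    admissible W f /\ (l2sq f <= Cap R W + (n.+1%:R^-1)%:E)%E.
  by have [F FW] := choice near_min; exists F.
have e0 : (0 : R) < n.+1%:R^-1 by rewrite invr_gt0 ltr0n.
have := lb_ereal_inf_adherent e0 (Cap_fin_num R W).
by move=> [_ [f af <-] lt]; exists f; split => //; exact: ltW.
Qed.

Lemma admissible_lim (F : nat -> vtx -> R) h :
  (forall n, admissible W (F n)) -> (forall x, F n x @[n --> \oo] --> h x) ->
  admissible W h.
Proof.
move=> aF Fh w Ww.
have IFh : Iop (F n) w @[n --> \oo] --> Iop h w.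
  by apply: cvg_big => [|j _]; [exact: add_continuous | exact: Fh].
by apply: (cvgr_to_ge IFh); apply: nearW => n; exact: aF.
Qed.

Lemma l2sq_lim_le (F : nat -> vtx -> R) h (b : nat -> R) (c : R) :
  (forall n, (l2sq (F n) <= (b n)%:E)%E) -> b @ \oo --> c ->
  (forall x, F n x @[n --> \oo] --> h x) -> (l2sq h <= c%:E)%E.
Proof.
move=> Fb bc Fh; apply: ge_ereal_sup => _ [X [finX _] <-].
rewrite fsbig_finite // sumEFin lee_fin.
set s := finmap.enum_fset _.
have sF n : \sum_(i <- s) F n i ^+ 2 <= b n.
  rewrite -lee_fin -sumEFin -fsbig_finite //; apply: le_trans (Fb n).
  by apply: ereal_sup_ubound; exists X.
have sFh : (fun n => \sum_(i <- s) F n i ^+ 2) @ \oo --> \sum_(i <- s) h i ^+ 2.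
  apply: cvg_big => [|i _]; first exact: add_continuous.
  by under eq_fun do rewrite expr2; rewrite expr2; apply: cvgM; exact: Fh.
by apply: (ler_cvg_to sFh bc); apply: nearW.
Qed.

Lemma exists_minimizer : exists h : vtx -> R, cap_minimizer W h.
Proof.
have [F FW] := near_minimizing_seq.
have Fcvg x : cvg (F n x @[n --> \oo]).
  apply: cvg_harmonic_cauchy => n m.
  by apply: (near_minimizers_close _ _ _ _ _ _ (FW n).1 (FW m).1 (FW n).2 (FW m).2).
pose h x := lim (F n x @[n --> \oo]).
have Fh x : F n x @[n --> \oo] --> h x by exact: Fcvg.
have ah : admissible W h := admissible_lim _ _ (fun n => (FW n).1) Fh.
exists h; split => //; apply/eqP; rewrite eq_le Cap_le_l2sq // andbT.
rewrite -(fineK (Cap_fin_num R W)).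
apply: (l2sq_lim_le F h (fun n => fine (Cap R W) + n.+1%:R^-1) _ _ _ Fh).
  by move=> n; rewrite EFinD fineK ?(Cap_fin_num R W) //; exact: (FW n).2.
by rewrite -[X in _ --> X]addr0; apply: cvgD; [exact: cvg_cst | exact: cvg_harmonic].
Qed.

End existence.

Section blowup.
Variables (R : realType) (W : set vtx) (h : vtx -> R).
Hypothesis hmin : cap_minimizer W h.

Lemma minimizer_Iop_ge (rho : R) t k : W k -> prefix t k ->
  rho * (depth k)%:R <= (depth t)%:R -> rho <= Iop h t.
Proof.
move=> Wk tk rho_t; pose a j := h (take j k).
have a_dec j : a j.+1 <= a j.
  rewrite /a; case: (ltnP j (size k)) => jk.
    by rewrite (take_nth false jk); exact: (minimizer_nonincreasing _ _ _ _ _ hmin).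
  by rewrite !take_oversize // leqW.
have tk_size : (0 < (size t).+1 <= (size k).+1)%N.
  by rewrite ltnS; exact: size_prefix.
have := nonincreasing_sum_avg _ _ _ a_dec tk_size.
rewrite -(Iop_prefix h _ _ tk) -(Iop_prefix h _ _ (prefix_refl k)) => avg.
have Hk := hmin.1 k Wk; have k0 : (0 : R) < (size k).+1%:R by rewrite ltr0n.
have t0 : (0 : R) <= (size t).+1%:R by [].
rewrite -(ler_pM2r k0); move: avg rho_t k0 t0 Hk; rewrite /depth.
by move: (size t).+1%:R (size k).+1%:R (Iop h t) (Iop h k) => T K Ht Hk'; nra.
Qed.

Lemma shadow_blowup_sub (rho : R) :
  shadow R (blowup rho W) `<=` shadow R (cap_blowup rho W h).
Proof.
move=> p [t [[k Wk [tk [rho_t _]]] _] pt].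
have ex : exists j, (j <= size t)%N && (rho <= Iop h (take j t)).
  by exists (size t); rewrite leqnn take_size (minimizer_Iop_ge _ _ _ Wk tk rho_t).
have [j /andP [jt rho_j] jmin] := ex_minnP ex.
exists (take j t); last exact: (arc_prefix_sub R _ _ (prefix_take t j)).
split; first by exists k => //; exact: prefix_trans (prefix_take t j) tk.
split => // x /andP [xj /negP x_neq]; rewrite leNgt; apply/negP => rho_x.
have sj : size (take j t) = j by rewrite size_takel.
have x_def : take (size x) (take j t) = x by apply/eqP; rewrite -prefixE.
have sx_le : (size x <= j)%N by rewrite -sj size_prefix.
have sx : (size x < j)%N.
  rewrite ltn_neqAle sx_le andbT; apply/eqP => sxj; apply: x_neq; apply/eqP.
  by rewrite -x_def sxj -{1}sj take_size.
have xt : x = take (size x) t by rewrite -{1}x_def take_takel.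
have := jmin (size x); rewrite -xt (ltW rho_x) (leq_trans (ltnW sx) jt).
by move=> /(_ isT); rewrite leqNgt sx.
Qed.

Lemma admissible_blowup (rho : R) : 0 < rho ->
  admissible (blowup rho W) (fun x => rho^-1 * h x).
Proof.
move=> rho0 t [[k Wk [tk [rho_t _]]] _]; rewrite IopZ.
by rewrite ler_pdivlMl // mulr1 (minimizer_Iop_ge _ _ _ Wk tk rho_t).
Qed.

End blowup.

Theorem mainTheorem5 (R : realType) (W : set vtx) (rho : R) :
  stopping_time W -> 0 < rho -> rho < 1 ->
  (forall h : vtx -> R, cap_minimizer W h ->
     shadow R (blowup rho W) `<=` shadow R (cap_blowup rho W h)) /\
  (Cap R (blowup rho W) <= (rho ^- 2)%:E * Cap R W)%E.
Proof.
move=> _ rho0 _; split=> [h hmin|]; first exact: shadow_blowup_sub.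
have [h hmin] := exists_minimizer (R := R) W.
rewrite -hmin.2 -exprVn -l2sq_scale.
by apply: Cap_le_l2sq; apply: (admissible_blowup _ _ _ hmin).
Qed.
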